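(* Let $\mathcal X\subseteq\mathbb R^m$ be nonempty, convex and compact with diameter $D>0$, $F:\mathbb R^m\to\mathbb R^r$ affine, $C\in\mathbb R^{r\times n}$, $\Theta(x,y)=\frac12\|F(x)-Cy\|^2$, and let $L>0$ be such that for every $y\in\{0,1\}^n$, $\Theta(\cdot,y)$ is $L$-Lipschitz on $\mathcal X$ and $\|\nabla_x\Theta(x,y)\|\le L$ for $x\in\mathcal X$. Let $\operatorname{ALG}$ be a $\gamma$-approximation algorithm ($\gamma\in(0,1]$) for maximizing $\Theta(x,\cdot)$ over $\{0,1\}^n$, for every $x\in\mathcal X$. Given $\epsilon>0$, set $K=\lceil((D^2+L^2)/(2\epsilon))^2\rceil$, choose $x_0\in\mathcal X$, and for $k=0,\dots,K-1$ let $y_k=\operatorname{ALG}(\Theta(x_k,\cdot))$ and $x_{k+1}=\operatorname{Proj}_{\mathcal X}(x_k-K^{-1/2}\nabla_x\Theta(x_k,y_k))$. Let $\hat x=\frac1K\sum_{k=0}^{K-1}x_k$ and $\hat y=\operatorname{ALG}(\Theta(\hat x,\cdot))$. Then $(\hat x,\hat y)$ is a $(\gamma,\epsilon/\gamma)$-approximate minimax point of $\min_{x\in\mathcal X}\max_{y\in\{0,1\}^n}\Theta(x,y)$.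
   Context: $\operatorname{Proj}_{\mathcal X}$ is Euclidean projection onto $\mathcal X$. An algorithm is a $\gamma$-approximation algorithm for $\max_{y\in\mathcal Y}h(y)$ with nonnegative $h$ if on every instance it returns, in polynomial time, a feasible $\hat y\in\mathcal Y$ with $h(\hat y)\ge\gamma h(y^* )$ where $y^*$ is optimal. With $\mathcal Y=\{0,1\}^n$, a pair $(x^*,y^* )\in\mathcal X\times\mathcal Y$ is an $(\alpha,\epsilon)$-approximate minimax point ($\alpha\in(0,1]$, $\epsilon\ge0$) if $\alpha\max_{y\in\mathcal Y}\Theta(x^*,y)\le\Theta(x^*,y^* )\le\frac1\alpha\min_{x\in\mathcal X}\max_{y\in\mathcal Y}\Theta(x,y)+\epsilon$. *)

From HB Require Import structures.
From mathcomp Require Import all_boot all_order all_algebra.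
From mathcomp Require Import all_classical all_reals all_analysis.
Set Implicit Arguments. Unset Strict Implicit. Unset Printing Implicit Defensive.
Import Order.TTheory GRing.Theory Num.Theory numFieldNormedType.Exports.
Local Open Scope classical_set_scope.
Local Open Scope ring_scope.

Definition edot (R : realType) (m : nat) (u v : 'cV[R]_m) : R :=
  \sum_(i < m) u i 0 * v i 0.
Definition enorm (R : realType) (m : nat) (v : 'cV[R]_m) : R :=
  Num.sqrt (edot v v).

Definition convex_setR (R : realType) (m : nat) (X : set 'cV[R]_m) : Prop :=
  forall x y t, X x -> X y -> 0 <= t <= 1 -> X (t *: x + (1 - t) *: y).

Definition diam (R : realType) (m : nat) (X : set 'cV[R]_m) : R :=
  sup [set enorm (x - y) | x in X & y in X].

(* Euclidean projection onto X: a point of X nearest to z (unique when X is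
   nonempty, closed and convex). *)
Definition Proj (R : realType) (m : nat) (X : set 'cV[R]_m) (z : 'cV[R]_m)
  : 'cV[R]_m :=
  xget z [set p | X p /\ forall x, X x -> enorm (z - p) <= enorm (z - x)].

Definition is_gradient (R : realType) (m : nat) (f : 'cV[R]_m -> R)
  (x g : 'cV[R]_m) : Prop :=
  forall v : 'cV[R]_m,
    (fun h : R => h^-1 * (f (x + h *: v) - f x)) @ (0 : R)^' --> edot g v.

(* the gradient (0 if it does not exist) *)
Definition grad (R : realType) (m : nat) (f : 'cV[R]_m -> R) (x : 'cV[R]_m)
  : 'cV[R]_m :=
  xget 0 [set g | is_gradient f x g].

(* the binary points y in {0,1}^n, encoded as boolean finite functions *)
Definition bvec (R : realType) (n : nat) (y : {ffun 'I_n -> bool}) : 'cV[R]_n :=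
  \col_i ((y i)%:R).

(* Theta(x, y) = 1/2 || F(x) - C y ||^2 with F(x) = A x + b affine *)
Definition Theta (R : realType) (m r n : nat) (A : 'M[R]_(r, m)) (b : 'cV[R]_r)
  (C : 'M[R]_(r, n)) (x : 'cV[R]_m) (y : {ffun 'I_n -> bool}) : R :=
  2^-1 * enorm (A *m x + b - C *m bvec R y) ^+ 2.

(* max over y in {0,1}^n of a nonnegative function (finite nonempty max) *)
Definition maxY (R : realType) (n : nat) (h : {ffun 'I_n -> bool} -> R) : R :=
  \big[Num.max/0]_(y : {ffun 'I_n -> bool}) h y.

(* (alpha, eps)-approximate minimax point of min_{x in X} max_y Th(x, y);
   the min over the compact X is written as an inf (it is attained). *)
Definition approx_minimax (R : realType) (m n : nat) (X : set 'cV[R]_m)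
  (Th : 'cV[R]_m -> {ffun 'I_n -> bool} -> R) (alpha eps : R)
  (xs : 'cV[R]_m) (ys : {ffun 'I_n -> bool}) : Prop :=
  X xs /\
  alpha * maxY (Th xs) <= Th xs ys <=
    alpha^-1 * inf [set maxY (Th x) | x in X] + eps.

(* gamma-approximation algorithm (output quality part) for max_y Theta(x,.),
   for every x in X; the algorithm is a map from instances (indexed by x) to
   outputs. *)
Definition approx_alg (R : realType) (m n : nat) (X : set 'cV[R]_m)
  (Th : 'cV[R]_m -> {ffun 'I_n -> bool} -> R) (gamma : R)
  (ALG : 'cV[R]_m -> {ffun 'I_n -> bool}) : Prop :=
  forall x, X x -> gamma * maxY (Th x) <= Th x (ALG x).

Fixpoint iterates (R : realType) (m n : nat) (X : set 'cV[R]_m)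
  (Th : 'cV[R]_m -> {ffun 'I_n -> bool} -> R)
  (ALG : 'cV[R]_m -> {ffun 'I_n -> bool}) (eta : R) (x0 : 'cV[R]_m) (k : nat)
  : 'cV[R]_m :=
  match k with
  | 0 => x0
  | k'.+1 =>
      let xk := iterates X Th ALG eta x0 k' in
      Proj X (xk - eta *: grad (fun x => Th x (ALG xk)) xk)
  end.

(* Theta(., y) is a convex quadratic whose gradient at x is g = A^T (A x + b - C y),
   so Theta(x', y) >= Theta(x, y) + <g, x' - x>.  Since the projection onto a
   convex set does not increase distances to points of the set, one projected
   step gives the classical inequality
     |x_{k+1} - x|^2 <= |x_k - x|^2 - 2 eta (Theta(x_k, y_k) - Theta(x, y_k)) + eta^2 L^2,
   and Theta(x_k, y_k) >= gamma max_y Theta(x_k, y) while Theta(x, y_k) <= max_y Theta(x, y).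
   Telescoping over K steps with eta = K^(-1/2) bounds the average of
   gamma max_y Theta(x_k, .) - max_y Theta(x, .) by (D^2 + L^2) / (2 sqrt K) <= eps,
   and by convexity max_y Theta(xhat, .) is at most the average of the max_y Theta(x_k, .). *)
From HB Require Import structures.
From mathcomp Require Import all_boot all_order all_algebra.
From mathcomp Require Import all_classical all_reals all_analysis.
From mathcomp Require Import ring lra.
Import Order.TTheory GRing.Theory Num.Theory numFieldNormedType.Exports.
Local Open Scope classical_set_scope.
Local Open Scope ring_scope.

Section EuclideanDot.
Context {R : realType} {m : nat}.
Implicit Types u v w : 'cV[R]_m.

Lemma edotC u v : edot u v = edot v u.
Proof. by apply: eq_bigr => i _; rewrite mulrC. Qed.

Lemma edotDl u v w : edot (u + v) w = edot u w + edot v w.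
Proof. by rewrite /edot -big_split; apply: eq_bigr => i _; rewrite !mxE mulrDl. Qed.

Lemma edotNl u w : edot (- u) w = - edot u w.
Proof. by rewrite /edot -sumrN; apply: eq_bigr => i _; rewrite !mxE mulNr. Qed.

Lemma edotBl u v w : edot (u - v) w = edot u w - edot v w.
Proof. by rewrite edotDl edotNl. Qed.

Lemma edotZl a u w : edot (a *: u) w = a * edot u w.
Proof. by rewrite /edot mulr_sumr; apply: eq_bigr => i _; rewrite !mxE mulrA. Qed.

Lemma edotDr u v w : edot w (u + v) = edot w u + edot w v.
Proof. by rewrite edotC edotDl !(edotC w). Qed.

Lemma edotBr u v w : edot w (u - v) = edot w u - edot w v.
Proof. by rewrite edotC edotBl !(edotC w). Qed.

Lemma edotZr a u w : edot w (a *: u) = a * edot w u.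
Proof. by rewrite edotC edotZl edotC. Qed.

Lemma edot_sumr (I : finType) (f : I -> 'cV[R]_m) w :
  edot w (\sum_k f k) = \sum_k edot w (f k).
Proof.
rewrite /edot exchange_big /=; apply: eq_bigr => i _.
by rewrite summxE mulr_sumr.
Qed.

Lemma edot_ge0 u : 0 <= edot u u.
Proof. by apply: sumr_ge0 => i _; rewrite -expr2 sqr_ge0. Qed.

Lemma edot_sqrB u v : edot (u - v) (u - v) = edot u u - 2 * edot u v + edot v v.
Proof. by rewrite !edotBl !edotBr (edotC v u); ring. Qed.

Lemma enorm_ge0 u : 0 <= enorm u.
Proof. exact: sqrtr_ge0. Qed.

Lemma enorm_sqr u : enorm u ^+ 2 = edot u u.
Proof. by rewrite /enorm sqr_sqrtr // edot_ge0. Qed.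

Lemma ler_enorm u v : (enorm u <= enorm v) = (edot u u <= edot v v).
Proof. by rewrite /enorm ler_sqrt // edot_ge0. Qed.

Lemma edot_le_sqr u c : enorm u <= c -> edot u u <= c ^+ 2.
Proof.
move=> uc; rewrite -enorm_sqr lerXn2r ?nnegrE ?enorm_ge0 //.
exact: le_trans (enorm_ge0 u) uc.
Qed.

Lemma continuous_edot_sqrB u : continuous (fun v : 'cV[R]_m => edot (u - v) (u - v)).
Proof.
rewrite /edot; apply: continuous_big => [|i _]; first exact: add_continuous.
move=> v; have cont_entry : {for v, continuous (fun w : 'cV[R]_m => (u - w) i 0)}.
  under [fun w => _]funext do rewrite !mxE.
  apply: continuousB; first exact: cst_continuous.
  exact: coord_continuous.
exact: (continuousM cont_entry cont_entry).
Qed.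

End EuclideanDot.

Lemma edot_trmx_mul (R : realType) (r m : nat) (A : 'M[R]_(r, m)) w v :
  edot (A^T *m w) v = edot w (A *m v).
Proof.
rewrite /edot.
under eq_bigr do rewrite mxE mulr_suml.
under [RHS]eq_bigr do rewrite mxE mulr_sumr.
rewrite exchange_big /=; apply: eq_bigr => j _; apply: eq_bigr => i _.
by rewrite mxE; ring.
Qed.

Section ThetaGradient.
Context {R : realType} {m r n : nat} (A : 'M[R]_(r, m)) (b : 'cV[R]_r)
  (C : 'M[R]_(r, n)).
Local Notation Theta := (Theta A b C).

Definition residual x (y : {ffun 'I_n -> bool}) := A *m x + b - C *m bvec R y.
Definition Theta_grad x y := A^T *m residual x y.

Lemma ThetaE x y : Theta x y = 2^-1 * edot (residual x y) (residual x y).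
Proof. by rewrite /Theta enorm_sqr. Qed.

Lemma Theta_taylor x x' y :
  Theta x' y = Theta x y + edot (Theta_grad x y) (x' - x)
     + 2^-1 * edot (A *m (x' - x)) (A *m (x' - x)).
Proof.
rewrite !ThetaE /Theta_grad edot_trmx_mul.
have -> : residual x' y = residual x y + A *m (x' - x).
  by rewrite /residual mulmxBr; set p := A *m x'; set q := A *m x;
     rewrite [RHS]addrC !addrA subrK.
move: (residual x y) (A *m (x' - x)) => w d.
by rewrite !edotDl !edotDr (edotC d w); field.
Qed.

Lemma Theta_ge_linear x x' y :
  Theta x y + edot (Theta_grad x y) (x' - x) <= Theta x' y.
Proof. by rewrite (Theta_taylor x x') lerDl mulr_ge0 ?invr_ge0 ?ler0n ?edot_ge0. Qed.

Lemma is_gradient_Theta x y : is_gradient (Theta^~ y) x (Theta_grad x y).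
Proof.
move=> v.
set a := edot (Theta_grad x y) v; set c := 2^-1 * edot (A *m v) (A *m v).
have quotE : {near (0:R)^', (fun h : R => a + h * c) =1
    (fun h : R => h^-1 * (Theta (x + h *: v) y - Theta x y))}.
  near=> h.
  have hn0 : h != 0 by near: h; exact: nbhs_dnbhs_neq.
  rewrite (Theta_taylor x) [x + _]addrC addrK edotZr -scalemxAr edotZl edotZr.
  by rewrite /a /c; field.
apply: cvg_trans (near_eq_cvg quotE) _.
have cont : {for 0, continuous (fun h : R => a + h * c)}.
  by apply: continuousD; [exact: cvg_cst | apply: continuousM => //; exact: cvg_cst].
have limE : a + 0 * c = a by rewrite mul0r addr0.
rewrite -{2}limE; apply: cvg_trans cont; exact/cvg_app/cvg_within.
Unshelve. all: by end_near.
Qed.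

Lemma edot_grad_Theta x y v :
  edot (grad (Theta^~ y) x) v = edot (Theta_grad x y) v.
Proof.
have gradP : is_gradient (Theta^~ y) x (grad (Theta^~ y) x).
  by apply: xgetPex; exists (Theta_grad x y); exact: is_gradient_Theta.
exact: cvg_unique (gradP v) (is_gradient_Theta x y v).
Qed.

End ThetaGradient.

Section Projection.
Context {R : realType} {m : nat} {X : set 'cV[R]_m}.
Hypotheses (X0 : X !=set0) (cX : compact X) (cvX : convex_setR X).

Lemma ProjP z : X (Proj X z) /\
  forall x, X x -> edot (z - Proj X z) (z - Proj X z) <= edot (z - x) (z - x).
Proof.
have [p Xp pmin] : exists2 p, X p & forall x, X x ->
    edot (z - p) (z - p) <= edot (z - x) (z - x).
  have [p Xp pmin] := compact_EVT_min X0 cX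
    (continuous_subspaceT (continuous_edot_sqrB z)).
  by exists p => [|x Xx]; [rewrite -inE | apply: pmin; rewrite inE].
have : [set p | X p /\ forall x, X x -> enorm (z - p) <= enorm (z - x)]
         (Proj X z).
  by apply: xgetPex; exists p; split => // x /pmin; rewrite ler_enorm.
by move=> [XP Pmin]; split => // x /Pmin; rewrite ler_enorm.
Qed.

(* Moving from the nearest point p towards x by t = <z - p, x - p> / (<z - p, x - p> + |x - p|^2)
   would get strictly closer to z if that inner product were positive. *)
Lemma nearest_obtuse z p x : X p ->
  (forall x, X x -> edot (z - p) (z - p) <= edot (z - x) (z - x)) ->
  X x -> edot (z - p) (x - p) <= 0.
Proof.
move=> Xp pmin Xx; set u := z - p; set d := x - p.
rewrite leNgt; apply/negP => apos; set a := edot u d in apos.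
have N0 : 0 <= edot d d by exact: edot_ge0.
set t := a / (a + edot d d).
have t0 : 0 < t by rewrite divr_gt0 // ltr_wpDr.
have t1 : t <= 1 by rewrite ler_pdivrMr ?mul1r ?lerDl // ltr_wpDr.
have tN : t * edot d d <= a.
  rewrite /t mulrAC ler_pdivrMr ?ltr_wpDr //.
  rewrite ler_wpM2l ?(ltW apos) //; lra.
have Xq : X (t *: x + (1 - t) *: p) by apply: cvX => //; rewrite (ltW t0) t1.
have := pmin _ Xq.
have -> : z - (t *: x + (1 - t) *: p) = u - t *: d.
  rewrite /u /d scalerBl scale1r scalerBr; set tx := t *: x; set tp := t *: p.
  by rewrite opprD !opprB !addrA [LHS]addrAC [z - tx - p]addrAC [RHS]addrAC.
rewrite (edot_sqrB u (t *: d)) !edotZr !edotZl -/a => closer.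
have : 2 * a <= t * edot d d by rewrite -(ler_pM2l t0); nra.
lra.
Qed.

Lemma Proj_in z : X (Proj X z).
Proof. by have [] := ProjP z. Qed.

Lemma Proj_sqr_le z x : X x ->
  edot (Proj X z - x) (Proj X z - x) <= edot (z - x) (z - x).
Proof.
move=> Xx; have [XP Pmin] := ProjP z.
set P := Proj X z in XP Pmin *.
have obtuse : edot (z - P) (x - P) <= 0 by apply: nearest_obtuse.
set u := z - P in obtuse *; set d := x - P in obtuse *.
have -> : z - x = u - d by rewrite /u /d opprB addrA subrK.
have -> : P - x = - d by rewrite /d opprB.
rewrite edot_sqrB edotNl edotC edotNl opprK.
by have := edot_ge0 u; lra.
Qed.

End Projection.

Lemma enorm_le_diam (R : realType) (m : nat) (X : set 'cV[R]_m) x y :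
  0 < diam X -> X x -> X y -> enorm (x - y) <= diam X.
Proof.
move=> D0 Xx Xy; apply: ub_le_sup; last by exists x => //; exists y.
apply: contrapT => unbounded.
by move: D0; rewrite /diam sup_out ?ltxx // => -[].
Qed.

Lemma convex_avg_in (R : realType) (m : nat) (X : set 'cV[R]_m)
  (x : nat -> 'cV[R]_m) N :
  convex_setR X -> (forall k, X (x k)) -> (0 < N)%N ->
  X (N%:R^-1 *: \sum_(k < N) x k).
Proof.
move=> cvX Xx; elim: N => [//|N IH] _.
rewrite big_ord_recr /=.
have [->|N0] := eqVneq N 0%N; first by rewrite big_ord0 add0r invr1 scale1r.
have NR : (N%:R : R) != 0 by rewrite pnatr_eq0.
set t : R := N%:R / N.+1%:R.
have -> : N.+1%:R^-1 *: (\sum_(k < N) x k + x N) =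
    t *: (N%:R^-1 *: \sum_(k < N) x k) + (1 - t) *: x N.
  rewrite scalerDr scalerA; congr (_ *: _ + _ *: _).
    by rewrite /t mulrAC divff // mul1r.
  by rewrite /t -natr1; field; rewrite natr1.
apply: cvX; [by apply: IH; rewrite lt0n | exact: Xx |].
by rewrite /t divr_ge0 //= ler_pdivrMr ?ltr0n // mul1r ler_nat.
Qed.

Lemma telescope_le {R : realType} {d s : nat -> R} {c : R} :
  (forall k, d k.+1 <= d k - s k + c) ->
  forall N, \sum_(k < N) s k <= d 0%N - d N + N%:R * c.
Proof.
move=> step; elim=> [|N IH]; first by rewrite big_ord0 subrr mul0r addr0.
by rewrite big_ord_recr /= -natr1 mulrDl mul1r; have := step N; lra.
Qed.

Section MaxY.
Context {R : realType} {n : nat} (h : {ffun 'I_n -> bool} -> R).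

Lemma maxY_ge y : h y <= maxY h.
Proof. exact: le_bigmax. Qed.

Lemma maxY_ge0 : 0 <= maxY h.
Proof. exact: bigmax_ge_id. Qed.

Lemma maxY_le c : 0 <= c -> (forall y, h y <= c) -> maxY h <= c.
Proof. by move=> c0 hc; apply: bigmax_le. Qed.

End MaxY.

Section ThetaAverage.
Context {R : realType} {m r n : nat} (A : 'M[R]_(r, m)) (b : 'cV[R]_r)
  (C : 'M[R]_(r, n)) {N : nat} (p : 'I_N -> 'cV[R]_m).
Hypothesis N_gt0 : (0 < N)%N.
Local Notation Theta := (Theta A b C).
Local Notation pavg := (N%:R^-1 *: \sum_k p k).

Lemma Theta_avg_le y : Theta pavg y <= N%:R^-1 * \sum_k Theta (p k) y.
Proof.
have NR : (N%:R : R) != 0 by rewrite pnatr_eq0 -lt0n.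
set g := Theta_grad A b C pavg y.
have centered : \sum_k edot g (p k - pavg) = 0.
  have sumE : edot g (\sum_k p k) = N%:R * edot g pavg.
    by rewrite edotZr mulrA mulfV ?mul1r.
  under eq_bigr do rewrite edotBr.
  by rewrite sumrB -edot_sumr sumr_const card_ord sumE mulr_natl subrr.
have le_sum : \sum_k (Theta pavg y + edot g (p k - pavg)) <= \sum_k Theta (p k) y.
  by apply: ler_sum => k _; exact: Theta_ge_linear.
move: le_sum; rewrite big_split /= centered addr0 sumr_const card_ord.
by rewrite ler_pdivlMl ?ltr0n // mulr_natl.
Qed.

Lemma maxY_Theta_avg_le :
  maxY (Theta pavg) <= N%:R^-1 * \sum_k maxY (Theta (p k)).
Proof.
apply: maxY_le => [|y]; first by rewrite mulr_ge0 ?invr_ge0 ?sumr_ge0 // => k _; exact: maxY_ge0.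
apply: le_trans (Theta_avg_le y) _; rewrite ler_wpM2l ?invr_ge0 ?ler0n //.
by apply: ler_sum => k _; exact: maxY_ge.
Qed.

End ThetaAverage.

Section ProjectedSubgradient.
Context {R : realType} {m r n : nat} {X : set 'cV[R]_m} {A : 'M[R]_(r, m)}
  {b : 'cV[R]_r} {C : 'M[R]_(r, n)} {ALG : 'cV[R]_m -> {ffun 'I_n -> bool}}
  {gamma L eta : R} {x0 : 'cV[R]_m}.
Hypotheses (X0 : X !=set0) (cX : compact X) (cvX : convex_setR X) (Xx0 : X x0)
  (eta_gt0 : 0 < eta)
  (grad_le : forall y x, X x -> enorm (grad (fun z => Theta A b C z y) x) <= L)
  (algP : approx_alg X (Theta A b C) gamma ALG).
Local Notation Th := (Theta A b C).
Local Notation xk := (iterates X Th ALG eta x0).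

Lemma iterates_in k : X (xk k).
Proof. by case: k => [|k] //=; exact: Proj_in. Qed.

Lemma iterates_sqr_step xs : X xs -> forall k,
  edot (xk k.+1 - xs) (xk k.+1 - xs) <= edot (xk k - xs) (xk k - xs)
    - 2 * eta * (gamma * maxY (Th (xk k)) - maxY (Th xs)) + eta ^+ 2 * L ^+ 2.
Proof.
move=> Xs k /=; set y := ALG (xk k); set G := grad (Th^~ y) (xk k).
apply: le_trans (Proj_sqr_le X0 cX cvX _ _ Xs) _.
rewrite [_ - eta *: G - xs]addrAC (edot_sqrB (xk k - xs)) !edotZr !edotZl.
have GG : edot G G <= L ^+ 2 by apply/edot_le_sqr/grad_le/iterates_in.
have gap : gamma * maxY (Th (xk k)) - maxY (Th xs) <= edot (xk k - xs) G.
  have lin := Theta_ge_linear A b C (xk k) xs y.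
  have alg : gamma * maxY (Th (xk k)) <= Th (xk k) y by exact/algP/iterates_in.
  have := maxY_ge (Th xs) y.
  rewrite edotBr in lin; rewrite edotC /G edot_grad_Theta edotBr; lra.
have e2 : eta * (eta * edot G G) <= eta ^+ 2 * L ^+ 2.
  by rewrite mulrA -expr2 ler_wpM2l // exprn_ge0 // ltW.
by have := ler_wpM2l (ltW eta_gt0) gap; lra.
Qed.

Lemma iterates_avg_gap xs N : X xs -> (0 < N)%N ->
  gamma * (N%:R^-1 * \sum_(k < N) maxY (Th (xk k))) - maxY (Th xs) <=
  (edot (x0 - xs) (x0 - xs) + N%:R * eta ^+ 2 * L ^+ 2) / (2 * eta * N%:R).
Proof.
move=> Xs N0; have NR : (0 : R) < N%:R by rewrite ltr0n.
have := telescope_le (iterates_sqr_step xs Xs) N.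
rewrite -mulr_sumr sumrB -mulr_sumr sumr_const card_ord -[maxY (Th xs) *+ N]mulr_natl.
have := edot_ge0 (xk N - xs).
set S := \sum_(k < N) _; set f := maxY (Th xs) => dN regret.
rewrite ler_pdivlMr ?mulr_gt0 //.
have -> : (gamma * (N%:R^-1 * S) - f) * (2 * eta * N%:R) =
  2 * eta * (gamma * S - N%:R * f) by field; rewrite gt_eqF.
by rewrite mulrA; lra.
Qed.

End ProjectedSubgradient.

Lemma le_sqrt_ceil_sqr (R : realType) (c : R) : 0 <= c ->
  c <= Num.sqrt (`|Num.ceil (c ^+ 2)|%N%:R).
Proof.
move=> c0; have ceilE : c ^+ 2 <= `|Num.ceil (c ^+ 2)|%N%:R.
  rewrite natr_absz ger0_norm ?ceil_ge //.
  by rewrite ceil_ge0 (lt_le_trans _ (sqr_ge0 c)) // ltrN10.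
by rewrite -{1}(ger0_norm c0) -sqrtr_sqr ler_sqrt.
Qed.

Lemma approx_minimax_of_gap (R : realType) (m n : nat) (X : set 'cV[R]_m)
  (Th : 'cV[R]_m -> {ffun 'I_n -> bool} -> R) (gamma eps : R) xs ys :
  0 < gamma -> X xs -> gamma * maxY (Th xs) <= Th xs ys ->
  (forall x, X x -> gamma * maxY (Th xs) - eps <= maxY (Th x)) ->
  approx_minimax X Th gamma (eps / gamma) xs ys.
Proof.
move=> gamma0 Xs approx gap; split => //; rewrite approx /=.
have lb_inf : gamma * maxY (Th xs) - eps <= inf [set maxY (Th x) | x in X].
  by apply: lb_le_inf; [exists (maxY (Th xs)), xs | move=> _ [x Xx <-]; exact: gap].
apply: le_trans (maxY_ge (Th xs) ys) _.
by rewrite mulrC -mulrDl ler_pdivlMr // mulrC; lra.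
Qed.

Theorem mainTheorem6 (R : realType) (m r n : nat) (X : set 'cV[R]_m)
  (D L gamma eps : R) (A : 'M[R]_(r, m)) (b : 'cV[R]_r) (C : 'M[R]_(r, n))
  (ALG : 'cV[R]_m -> {ffun 'I_n -> bool}) (x0 : 'cV[R]_m) :
  X !=set0 -> convex_setR X -> compact X ->
  D = diam X -> 0 < D ->
  0 < L ->
  (forall y, forall x1 x2, X x1 -> X x2 ->
     `|Theta A b C x1 y - Theta A b C x2 y| <= L * enorm (x1 - x2)) ->
  (forall y x, X x -> enorm (grad (fun z => Theta A b C z y) x) <= L) ->
  0 < gamma <= 1 ->
  approx_alg X (Theta A b C) gamma ALG ->
  0 < eps ->
  X x0 ->
  let K := `|Num.ceil (((D ^+ 2 + L ^+ 2) / (2 * eps)) ^+ 2)|%N in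
  let xk := iterates X (Theta A b C) ALG (Num.sqrt K%:R)^-1 x0 in
  let xhat := K%:R^-1 *: \sum_(k < K) xk k in
  let yhat := ALG xhat in
  approx_minimax X (Theta A b C) gamma (eps / gamma) xhat yhat.
Proof.
move=> X0 cvX cX DX D0 L0 _ grad_le /andP[gamma0 _] algP eps0 Xx0 K xk xhat yhat.
set c := (D ^+ 2 + L ^+ 2) / (2 * eps).
have c0 : 0 < c by rewrite divr_gt0 ?mulr_gt0 // ltr_wpDr ?sqr_ge0 ?exprn_gt0.
have cK : c <= Num.sqrt K%:R by exact: le_sqrt_ceil_sqr (ltW c0).
have sK0 : 0 < Num.sqrt (K%:R : R) by exact: lt_le_trans cK.
have K0 : (0 < K)%N by rewrite -(ltr0n R) -sqrtr_gt0.
have Xhat : X xhat by apply: convex_avg_in => // k; exact: iterates_in.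
apply: approx_minimax_of_gap => // [|xs Xs]; first exact: algP.
have eta0 : 0 < (Num.sqrt (K%:R : R))^-1 by rewrite invr_gt0.
have gap := iterates_avg_gap X0 cX cvX Xx0 eta0 grad_le algP xs K Xs K0.
have jensen := maxY_Theta_avg_le A b C xk K0.
have dist0 : edot (x0 - xs) (x0 - xs) <= diam X ^+ 2.
  by apply/edot_le_sqr/enorm_le_diam; rewrite -?DX.
set sK := Num.sqrt (K%:R : R) in cK sK0 gap.
have rateE : (edot (x0 - xs) (x0 - xs) + K%:R * sK^-1 ^+ 2 * L ^+ 2) / (2 / sK * K%:R)
    = (edot (x0 - xs) (x0 - xs) + L ^+ 2) / (2 * sK).
  by rewrite -[K%:R](@sqr_sqrtr _ K%:R) ?ler0n // -/sK; field; rewrite gt_eqF.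
have rate_le : (edot (x0 - xs) (x0 - xs) + L ^+ 2) / (2 * sK) <= eps.
  rewrite ler_pdivrMr ?mulr_gt0 //; move: cK; rewrite /c ler_pdivrMr ?mulr_gt0 //.
  by rewrite -DX in dist0; nra.
have := ler_wpM2l (ltW gamma0) jensen; rewrite -/xhat rateE in gap *; lra.
Qed.
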